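(* Let $\mathcal M_1,\mathcal M_2$ and the relation $Z$ be as defined in the context. Then $Z$ is a CD-asimulation between $\mathcal M_1$ and $\mathcal M_2$.
   Context: Let $\mathbb N=\{0,1,2,\dots\}$ and for $k>0$, $l\ge0$ let $k\mathbb N+l=\{kn+l: n\in\mathbb N\}$, $k\mathbb N=k\mathbb N+0$. A quasi-partition is a triple $(A,B,C)$ of pairwise disjoint subsets of $\mathbb N$ with $A\cup B\cup C=\mathbb N$, $A$ and $C$ infinite, and $B$ either empty or infinite. Order quasi-partitions by $(A,B,C)\sqsubseteq(D,E,F)$ iff $A\subseteq D$ and $F\subseteq C$. Let $\mathbf v=(\mathbf v_1,\mathbf v_2,\mathbf v_3)=(3\mathbb N,3\mathbb N+1,3\mathbb N+2)$ and $\mathbf w=(2\mathbb N,\emptyset,2\mathbb N+1)$. A G-model is $\langle W,\le,v_0,D,\phi\rangle$ with $\le$ a reflexive transitive relation on the nonempty set $W$, base point $v_0\le v$ for all $v$, nonempty domain $D$, and for each $k$-ary predicate symbol a monotone set $\phi(P)\subseteq W\times D^k$ (if $v\le w$ and $\langle v,\vec a\rangle\in\phi(P)$ then $\langle w,\vec a\rangle\in\phi(P)$); atomic forcing: $v\Vdash P\vec{\mathbf a}$ iff $\langle v,\vec a\rangle\in\phi(P)$. $\mathcal M_1$: states $W_1$ = all quasi-partitions $(A,B,C)$ with $\mathbf v\sqsubseteq(A,B,C)$ and $B\cap\mathbf v_2$ infinite; base point $\mathbf v$. $\mathcal M_2$: states $W_2$ = all quasi-partitions $(A,B,C)$ with $\mathbf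 w\sqsubseteq(A,B,C)$ and $B\ne\emptyset$, together with $\mathbf w$; base point $\mathbf w$. In both, the order is $\sqsubseteq$, the domain is $\mathbb N$, and the only predicate symbols are unary $P,Q$ with: state $s=(s_1,s_2,s_3)$ forces $P\mathbf a$ iff $a\in s_1\cup s_2$, and forces $Q\mathbf a$ iff $a\in s_1$. $\Vdash_i$, $\le_i$ denote forcing and order in $\mathcal M_i$. For $\vec d,\vec e\in\mathbb N^k$, $[\vec d\mapsto\vec e]=\{\langle d_l,e_l\rangle:1\le l\le k\}$. Define $Z$: for $\{i,j\}=\{1,2\}$, $k\ge0$, $(A,B,C)\in W_i$, $\vec d\in\mathbb N^k$, $(D,E,F)\in W_j$, $\vec e\in\mathbb N^k$, we have $((A,B,C),\vec d)\,Z\,((D,E,F),\vec e)$ iff (a) $[\vec d\mapsto\vec e]$ is a bijection (from the set of entries of $\vec d$ to the set of entries of $\vec e$); (b) for $1\le l\le k$, $d_l\in A$ implies $e_l\in D$; (c) for $1\le l\le k$, $d_l\in B$ implies $e_l\in D\cup E$. No other pairs are in $Z$. A CD-asimulation between G-models $\mathcal M_1=\langle W_1,\le_1,\dots,D_1,\phi_1\rangle$ and $\mathcal M_2=\langle W_2,\le_2,\dots,D_2,\phi_2\rangle$ is a relation $Z\subseteq\bigcup_{k\ge0}[(W_1\times D_1^k)\times(W_2\times D_2^k)]\cup[(W_2\times D_2^k)\times(W_1\times D_1^k)]$ such that for all $\{i,j\}=\{1,2\}$: (1) if $(v,\vec d)Z(w,\vec e)$ with $v\in W_i$, and $v\Vdash_i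 P[\vec d]$ for an atomic formula $P[\vec x]$ with free variables among $x_1,\dots,x_k$, then $w\Vdash_j P[\vec e]$; (2) if $(t,\vec d)Z(u,\vec e)$ with $t\in W_i$, $u\in W_j$, and $u\le_j v$, then there is $w\in W_i$ with $t\le_i w$, $(w,\vec d)Z(v,\vec e)$ and $(v,\vec e)Z(w,\vec d)$; (3) if $t\in W_i$, $(t,\vec d)Z(u,\vec e)$ and $f\in D_i$, then there is $g\in D_j$ with $(t,\vec d f)Z(u,\vec e g)$; (4) if $t\in W_i$, $(t,\vec d)Z(u,\vec e)$ and $g\in D_j$, then there is $f\in D_i$ with $(t,\vec d f)Z(u,\vec e g)$, where $\vec d f$ is $\vec d$ extended by $f$. *)

From mathcomp Require Import all_boot.
Set Implicit Arguments. Unset Strict Implicit. Unset Printing Implicit Defensive.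

(* The state set is given as a carrier predicate [gin] on a type [gW];
   the domain is the whole type [gD], with a witness [gd0] of non-emptiness.
   [gphi P v ds] means <v, ds> \in phi(P), with ds a list of domain elements. *)
Record GModel (Sym : Type) (ar : Sym -> nat) := {
  gW : Type;
  gin : gW -> Prop;
  gle : gW -> gW -> Prop;
  gv0 : gW;
  gD : Type;
  gd0 : gD;
  gphi : Sym -> gW -> seq gD -> Prop
}.
Arguments GModel : clear implicits.
Arguments gW {Sym ar} g.
Arguments gin {Sym ar} g _.
Arguments gle {Sym ar} g _ _.
Arguments gv0 {Sym ar} g.
Arguments gD {Sym ar} g.
Arguments gd0 {Sym ar} g.
Arguments gphi {Sym ar} g _ _ _.

Definition is_GModel Sym ar (M : GModel Sym ar) : Prop :=
  gin M (gv0 M) /\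
  (forall v, gin M v -> gle M v v) /\
  (forall u v w, gin M u -> gin M v -> gin M w ->
      gle M u v -> gle M v w -> gle M u w) /\
  (forall v, gin M v -> gle M (gv0 M) v) /\
  (forall P v ds, gphi M P v ds -> gin M v /\ size ds = ar P) /\
  (forall P v w ds, gin M v -> gin M w -> gle M v w ->
      gphi M P v ds -> gphi M P w ds).

(* One direction (i -> j) of the CD-asimulation conditions.
   [Zij t d u e] encodes (t, d) Z (u, e) with t in W_i, u in W_j;
   [Zji] is the other half of Z. d ++ [f] is [rcons d f]. *)
Definition asim_dir Sym ar (Mi Mj : GModel Sym ar)
  (Zij : gW Mi -> seq (gD Mi) -> gW Mj -> seq (gD Mj) -> Prop)
  (Zji : gW Mj -> seq (gD Mj) -> gW Mi -> seq (gD Mi) -> Prop) : Prop :=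
  (forall t d u e, Zij t d u e -> gin Mi t /\ gin Mj u /\ size d = size e) /\
  (* (1) atomic formulas P[x_1..x_k]: P applied to variables x_{j} (j < k) *)
  (forall t d u e, Zij t d u e ->
     forall (P : Sym) (js : seq nat), size js = ar P ->
       all (fun j => j < size d) js ->
       gphi Mi P t (map (nth (gd0 Mi) d) js) ->
       gphi Mj P u (map (nth (gd0 Mj) e) js)) /\
  (forall t d u e v, Zij t d u e -> gin Mj v -> gle Mj u v ->
     exists w, gin Mi w /\ gle Mi t w /\ Zij w d v e /\ Zji v e w d) /\
  (forall t d u e (f : gD Mi), Zij t d u e ->
     exists g : gD Mj, Zij t (rcons d f) u (rcons e g)) /\
  (forall t d u e (g : gD Mj), Zij t d u e ->
     exists f : gD Mi, Zij t (rcons d f) u (rcons e g)).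

Definition is_CD_asimulation Sym ar (M1 M2 : GModel Sym ar)
  (Z12 : gW M1 -> seq (gD M1) -> gW M2 -> seq (gD M2) -> Prop)
  (Z21 : gW M2 -> seq (gD M2) -> gW M1 -> seq (gD M1) -> Prop) : Prop :=
  asim_dir Z12 Z21 /\ asim_dir Z21 Z12.

Definition nset := nat -> Prop.

Definition infinite (A : nset) : Prop := forall n, exists m, n <= m /\ A m.

Definition kNl (k l : nat) : nset := fun x => exists n, x = k * n + l.

Definition QP := (nset * nset * nset)%type.
Definition qp1 (s : QP) : nset := s.1.1.
Definition qp2 (s : QP) : nset := s.1.2.
Definition qp3 (s : QP) : nset := s.2.

Definition quasi_partition (s : QP) : Prop :=
  (forall n, ~ (qp1 s n /\ qp2 s n)) /\
  (forall n, ~ (qp1 s n /\ qp3 s n)) /\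
  (forall n, ~ (qp2 s n /\ qp3 s n)) /\
  (forall n, qp1 s n \/ qp2 s n \/ qp3 s n) /\
  infinite (qp1 s) /\ infinite (qp3 s) /\
  ((forall n, ~ qp2 s n) \/ infinite (qp2 s)).

Definition qle (s t : QP) : Prop :=
  (forall n, qp1 s n -> qp1 t n) /\ (forall n, qp3 t n -> qp3 s n).

Definition vv : QP := (kNl 3 0, kNl 3 1, kNl 3 2).
Definition ww : QP := (kNl 2 0, (fun _ => False), kNl 2 1).

Definition W1 (s : QP) : Prop :=
  quasi_partition s /\ qle vv s /\ infinite (fun n => qp2 s n /\ qp2 vv n).

Definition W2 (s : QP) : Prop :=
  (quasi_partition s /\ qle ww s /\ exists n, qp2 s n) \/ s = ww.

Inductive PQ := symP | symQ.
Definition arPQ (_ : PQ) : nat := 1.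

Definition phiPQ (S : PQ) (s : QP) (ds : seq nat) : Prop :=
  exists a, ds = [:: a] /\
    match S with
    | symP => qp1 s a \/ qp2 s a
    | symQ => qp1 s a
    end.

Definition mkM (Win : QP -> Prop) (base : QP) : GModel PQ arPQ :=
  {| gW := QP; gin := Win; gle := qle; gv0 := base;
     gD := nat; gd0 := 0; gphi := phiPQ |}.

Definition M1 : GModel PQ arPQ := mkM W1 vv.
Definition M2 : GModel PQ arPQ := mkM W2 ww.

(* [d |-> e] = {<d_l, e_l>} is a bijection from the entries of d
   onto the entries of e. *)
Definition pairrel (d e : seq nat) (a b : nat) : Prop :=
  exists l, l < size d /\ a = nth 0 d l /\ b = nth 0 e l.

Definition map_bij (d e : seq nat) : Prop :=
  (forall a, a \in d -> exists b, b \in e /\ pairrel d e a b /\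
                         forall b', pairrel d e a b' -> b' = b) /\
  (forall b, b \in e -> exists a, a \in d /\ pairrel d e a b /\
                         forall a', pairrel d e a' b -> a' = a).

Definition Zrel (Wi Wj : QP -> Prop) (s : QP) (d : seq nat)
    (t : QP) (e : seq nat) : Prop :=
  Wi s /\ Wj t /\ size d = size e /\
  map_bij d e /\
  (forall l, l < size d -> qp1 s (nth 0 d l) -> qp1 t (nth 0 e l)) /\
  (forall l, l < size d -> qp2 s (nth 0 d l) ->
      qp1 t (nth 0 e l) \/ qp2 t (nth 0 e l)).

Definition Z12 : gW M1 -> seq (gD M1) -> gW M2 -> seq (gD M2) -> Prop :=
  Zrel W1 W2.
Definition Z21 : gW M2 -> seq (gD M2) -> gW M1 -> seq (gD M1) -> Prop :=
  Zrel W2 W1.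

From mathcomp Require Import all_boot.
From mathcomp Require Import zify.
Set Implicit Arguments. Unset Strict Implicit.

(* Z relates tuples with the same equality pattern whose entries do not drop
   in level (A above B above C).  The forth conditions (3)/(4) are met by
   repeating a matched entry, or by pairing a fresh entry with a fresh point
   of the top part on the right (3) or of the bottom part on the left (4).
   For the back condition (2), given u <= v, take w to be t overwritten on
   the entries of d by the classes that v gives to the matching entries of
   e: this keeps w above t, makes (w,d) and (v,e) mutually Z-related, and
   leaves infinitely many points of every part untouched.  When t is the
   base point ww of M_2, whose middle part is empty, w is built over
   (2N, 4N+1, 4N+3) instead, since the other states of M_2 need a nonempty
   middle part. *)

Definition same_eq_pattern (d e : seq nat) :=
  forall l l', l < size d -> l' < size d ->
    (nth 0 d l = nth 0 d l' <-> nth 0 e l = nth 0 e l').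

Lemma map_bij_same_eq_pattern d e :
  size d = size e -> map_bij d e <-> same_eq_pattern d e.
Proof.
move=> Hs; split.
- move=> [Hde Hed] l l' hl hl'; split=> Heq.
  + have [b [_ [_ Hu]]] := Hde (nth 0 d l) (mem_nth 0 hl).
    rewrite (Hu (nth 0 e l)); last by exists l.
    by rewrite (Hu (nth 0 e l')) //; exists l'.
  + have hl2 : l < size e by rewrite -Hs.
    have [a [_ [_ Hu]]] := Hed (nth 0 e l) (mem_nth 0 hl2).
    rewrite (Hu (nth 0 d l)); last by exists l.
    by rewrite (Hu (nth 0 d l')) //; exists l'.
- move=> Hp; split.
  + move=> a ha; have hi : index a d < size d by rewrite index_mem.
    exists (nth 0 e (index a d)); split; first by rewrite mem_nth // -Hs.
    split; first by exists (index a d); rewrite nth_index.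
    move=> b' [l' [hl' [Ha ->]]]; apply: (proj1 (Hp _ _ hl' hi)).
    by rewrite nth_index // -Ha.
  + move=> b hb; have hi : index b e < size d by rewrite Hs index_mem.
    exists (nth 0 d (index b e)); split; first by rewrite mem_nth.
    split; first by exists (index b e); rewrite nth_index.
    move=> a' [l' [hl' [-> Hb]]]; apply: (proj2 (Hp _ _ hl' hi)).
    by rewrite nth_index // -Hb.
Qed.

Lemma same_eq_pattern_sym d e :
  size d = size e -> same_eq_pattern d e -> same_eq_pattern e d.
Proof.
by move=> Hs Hp l l' hl hl'; rewrite -Hs in hl hl'; have := Hp l l' hl hl'; tauto.
Qed.

Lemma same_eq_pattern_rcons d e f g :
  size d = size e -> same_eq_pattern d e ->
  (exists2 k, k < size d & f = nth 0 d k /\ g = nth 0 e k) \/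
    (f \notin d /\ g \notin e) ->
  same_eq_pattern (rcons d f) (rcons e g).
Proof.
move=> Hs Hp Hfg l l'; rewrite size_rcons => hl hl'; rewrite !nth_rcons -Hs.
have Hlast m : m < size d -> (nth 0 d m = f <-> nth 0 e m = g).
  move=> hm; case: Hfg => [[k hk [-> ->]]|[hf hg]]; first exact: Hp.
  split=> H; exfalso.
  - by move/negP: hf; apply; rewrite -H mem_nth.
  - by move/negP: hg; apply; rewrite -H mem_nth // -Hs.
have [h1|h1] := ltnP l (size d); have [h2|h2] := ltnP l' (size d).
- exact: Hp.
- have -> : l' = size d by lia.
  by rewrite eqxx; apply: Hlast.
- have -> : l = size d by lia.
  have [H1 H2] := Hlast _ h2.
  by rewrite eqxx; split=> /esym => [/H1|/H2] /esym.
- have -> : l = size d by lia.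
  by have -> : l' = size d by lia; rewrite eqxx.
Qed.

Lemma mem_nth_index (d : seq nat) x :
  x \in d -> exists l, l < size d /\ x = nth 0 d l.
Proof. by move=> hx; exists (index x d); rewrite index_mem nth_index. Qed.

Lemma forall_nth_rcons (P : nat -> nat -> Prop) d e f g : size d = size e ->
  (forall l, l < size d -> P (nth 0 d l) (nth 0 e l)) -> P f g ->
  forall l, l < size (rcons d f) -> P (nth 0 (rcons d f) l) (nth 0 (rcons e g) l).
Proof.
move=> Hs H Hfg l; rewrite size_rcons !nth_rcons -Hs => hl.
have [h|h] := ltnP l (size d); first exact: H.
have -> : l = size d by lia.
by rewrite eqxx.
Qed.

Lemma seq_ub (d : seq nat) : exists N, forall x, x \in d -> x < N.
Proof.
elim: d => [|a d [N HN]]; first by exists 0.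
by exists (maxn a.+1 N) => x; rewrite in_cons => /orP [/eqP ->|/HN]; lia.
Qed.

Lemma infinite_avoid (A : nset) (d : seq nat) :
  infinite A -> infinite (fun x => A x /\ x \notin d).
Proof.
move=> HA n; have [N HN] := seq_ub d; have [m [hm Am]] := HA (maxn n N).
exists m; split; first lia.
by split=> //; apply/negP => /HN; lia.
Qed.

Lemma infinite_fresh (A : nset) (d : seq nat) :
  infinite A -> exists x, A x /\ x \notin d.
Proof. by move=> /(infinite_avoid d)/(_ 0) [m [_ Hm]]; exists m. Qed.

Lemma kNl_infinite k l : 0 < k -> infinite (kNl k l).
Proof. by move=> hk n; exists (k * n + l); split; [nia | exists n]. Qed.

Lemma quasi_partition_ww : quasi_partition ww.
Proof.
rewrite /quasi_partition /qp1 /qp2 /qp3 /=.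
split; first by move=> n [].
split; first by move=> n [[a ->] [b Hb]]; lia.
split; first by move=> n [].
split.
  move=> x; case E: (x %% 2) => [|m]; [left | right; right];
  exists (x %/ 2); lia.
split; first exact: kNl_infinite.
split; first exact: kNl_infinite.
by left=> ? [].
Qed.

Definition mid : QP := (kNl 2 0, kNl 4 1, kNl 4 3).

Lemma quasi_partition_mid : quasi_partition mid.
Proof.
rewrite /quasi_partition /qp1 /qp2 /qp3 /=.
split; first by move=> n [[a ->] [b Hb]]; lia.
split; first by move=> n [[a ->] [b Hb]]; lia.
split; first by move=> n [[a ->] [b Hb]]; lia.
split.
  move=> x; case E: (x %% 2) => [|m]; first by left; exists (x %/ 2); lia.
  case E4: (x %% 4) => [|[|[|k]]]; try lia.
  - by right; left; exists (x %/ 4); lia.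
  - by right; right; exists (x %/ 4); lia.
split; first exact: kNl_infinite.
split; first exact: kNl_infinite.
by right; apply: kNl_infinite.
Qed.

Lemma qle_ww_mid : qle ww mid.
Proof. by split=> x //=; rewrite /qp3 /= => -[m ->]; exists (2 * m + 1); lia. Qed.

Lemma W1_quasi_partition s : W1 s -> quasi_partition s.
Proof. by case. Qed.

Lemma W2_quasi_partition s : W2 s -> quasi_partition s.
Proof. by case=> [[]//|->]; exact: quasi_partition_ww. Qed.

Lemma qle_refl s : qle s s.
Proof. by split. Qed.

Lemma qle_trans s t r : qle s t -> qle t r -> qle s r.
Proof. by move=> [h1 h2] [h3 h4]; split; auto. Qed.

Definition overlay_part (k : QP -> nset) (s : QP) (d e : seq nat) (v : QP) : nset :=
  fun x => (x \in d /\ exists l, l < size d /\ x = nth 0 d l /\ k v (nth 0 e l))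
           \/ (x \notin d /\ k s x).

Definition overlay s d e v : QP :=
  (overlay_part qp1 s d e v, overlay_part qp2 s d e v, overlay_part qp3 s d e v).

Lemma overlay_part_nth k s d e v l : same_eq_pattern d e -> l < size d ->
  (overlay_part k s d e v (nth 0 d l) <-> k v (nth 0 e l)).
Proof.
move=> Hp hl; split.
- case=> [[_ [l' [hl' [Heq Hk]]]] | [Hn _]].
  + by rewrite ((Hp l l' hl hl').1 Heq).
  + by rewrite mem_nth in Hn.
- by move=> Hk; left; split; [exact: mem_nth | exists l].
Qed.

Lemma overlay_part_notin k s d e v x :
  x \notin d -> (overlay_part k s d e v x <-> k s x).
Proof. by move=> hx; split=> [[[H _]|[_ H]] //|H]; [rewrite H in hx | right]. Qed.

Lemma overlay_quasi_partition s d e v :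
  same_eq_pattern d e -> quasi_partition s -> infinite (qp2 s) ->
  quasi_partition v ->
  quasi_partition (overlay s d e v) /\ infinite (qp2 (overlay s d e v)).
Proof.
move=> Hp [s12 [s13 [s23 [scov [s1inf [s3inf _]]]]]] Hinf [v12 [v13 [v23 [vcov _]]]].
rewrite /quasi_partition /qp1 /qp2 /qp3 /overlay /=.
have Hcase x : (exists l, l < size d /\ x = nth 0 d l) \/ x \notin d.
  by case: (boolP (x \in d)) => h; [left; exact: mem_nth_index | right].
have Hinfk k : infinite (k s) -> infinite (overlay_part k s d e v).
  move=> Hk n; have [m [hm [Am Bm]]] := infinite_avoid d Hk n.
  by exists m; split=> //; apply/overlay_part_notin.
split; last exact: Hinfk.
split; first by move=> x; case: (Hcase x) => [[l [hl ->]]|hx];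
  [rewrite !overlay_part_nth //; exact: v12 | rewrite !overlay_part_notin //; exact: s12].
split; first by move=> x; case: (Hcase x) => [[l [hl ->]]|hx];
  [rewrite !overlay_part_nth //; exact: v13 | rewrite !overlay_part_notin //; exact: s13].
split; first by move=> x; case: (Hcase x) => [[l [hl ->]]|hx];
  [rewrite !overlay_part_nth //; exact: v23 | rewrite !overlay_part_notin //; exact: s23].
split; first by move=> x; case: (Hcase x) => [[l [hl ->]]|hx];
  [rewrite !overlay_part_nth //; exact: vcov | rewrite !overlay_part_notin //; exact: scov].
by split; [|split; [|right]]; apply: Hinfk.
Qed.

Lemma qle_overlay t u v s d e :
  quasi_partition t -> quasi_partition u -> same_eq_pattern d e ->
  (forall l, l < size d -> qp1 t (nth 0 d l) -> qp1 u (nth 0 e l)) ->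
  (forall l, l < size d -> qp2 t (nth 0 d l) ->
     qp1 u (nth 0 e l) \/ qp2 u (nth 0 e l)) ->
  qle u v -> qle t s -> qle t (overlay s d e v).
Proof.
move=> [_ [_ [_ [tcov _]]]] [_ [u13 [u23 _]]] Hp c1 c2 [uv1 uv3] [ts1 ts3].
split=> x; rewrite /qp1 /qp3 /overlay /=; case: (boolP (x \in d)) => hx.
- have [l [hl ->]] := mem_nth_index hx.
  by rewrite overlay_part_nth // => /(c1 _ hl)/uv1.
- by rewrite overlay_part_notin //; apply: ts1.
- have [l [hl ->]] := mem_nth_index hx; rewrite overlay_part_nth // => /uv3 H.
  case: (tcov (nth 0 d l)) => [/(c1 _ hl) H1 | [/(c2 _ hl) H2 | //]].
  + by case: (u13 (nth 0 e l)).
  + by case: H2 => H2; [case: (u13 (nth 0 e l)) | case: (u23 (nth 0 e l))].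
- by rewrite overlay_part_notin //; apply: ts3.
Qed.

Lemma Zrel_overlay (Wi Wj : QP -> Prop) t d u e v s :
  Zrel Wi Wj t d u e -> Wj v -> Wi (overlay s d e v) ->
  Zrel Wi Wj (overlay s d e v) d v e /\ Zrel Wj Wi v e (overlay s d e v) d.
Proof.
move=> [_ [_ [Hs [Hb _]]]] Hv Hw.
have Hp := (map_bij_same_eq_pattern Hs).1 Hb.
split.
- do 4 split=> //.
  by split=> l hl; rewrite /qp1 /qp2 /overlay /= overlay_part_nth //; right.
- do 3 split=> //.
  split; first by apply/(map_bij_same_eq_pattern (esym Hs)); apply: same_eq_pattern_sym.
  by split=> l hl; rewrite -Hs in hl; rewrite /qp1 /qp2 /overlay /= !overlay_part_nth //; right.
Qed.

Lemma overlay_back (Wi Wj : QP -> Prop) t d u e v s :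
  Zrel Wi Wj t d u e -> quasi_partition t -> quasi_partition u ->
  quasi_partition s -> infinite (qp2 s) -> qle t s ->
  Wj v -> quasi_partition v -> qle u v ->
  [/\ quasi_partition (overlay s d e v), infinite (qp2 (overlay s d e v)),
      qle t (overlay s d e v) &
      Wi (overlay s d e v) -> exists w, Wi w /\ qle t w /\
                              Zrel Wi Wj w d v e /\ Zrel Wj Wi v e w d].
Proof.
move=> HZ qt qu qs Hinf Hts Hv qv Huv.
have [_ [_ [Hs [Hb [c1 c2]]]]] := HZ.
have Hp := (map_bij_same_eq_pattern Hs).1 Hb.
have [qw Hinfw] := overlay_quasi_partition Hp qs Hinf qv.
have Htw := qle_overlay qt qu Hp c1 c2 Huv Hts.
by split=> // Hw; exists (overlay s d e v); have := Zrel_overlay HZ Hv Hw.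
Qed.

Lemma W1_back t d u e v : Zrel W1 W2 t d u e -> W2 v -> qle u v ->
  exists w, W1 w /\ qle t w /\ Zrel W1 W2 w d v e /\ Zrel W2 W1 v e w d.
Proof.
move=> HZ Hv Huv; have [Ht [Hu _]] := HZ.
have [qt [Hvt Hinf]] := Ht.
have Hinf2 : infinite (qp2 t) by move=> n; have [m [? [? _]]] := Hinf n; exists m.
have [qw _ Htw] := overlay_back HZ qt (W2_quasi_partition Hu) qt Hinf2 (qle_refl t)
  Hv (W2_quasi_partition Hv) Huv.
apply; split=> //; split; first exact: qle_trans Hvt Htw.
move=> n; have [m [hm [[H1 H2] H3]]] := infinite_avoid d Hinf n.
by exists m; split=> //; split=> //; rewrite /qp2 /overlay /= overlay_part_notin.
Qed.

Lemma W2_back t d u e v : Zrel W2 W1 t d u e -> W1 v -> qle u v ->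
  exists w, W2 w /\ qle t w /\ Zrel W2 W1 w d v e /\ Zrel W1 W2 v e w d.
Proof.
move=> HZ Hv Huv; have [Ht [Hu _]] := HZ.
have qt := W2_quasi_partition Ht.
have Hwwt : qle ww t by case: Ht => [[_ []]//|->]; exact: qle_refl.
have [s [qs Hinf Hts]] :
    exists s, [/\ quasi_partition s, infinite (qp2 s) & qle t s].
  case: (Ht) => [[_ [_ [n Hn]]] | Et].
  - exists t; split; [done | | exact: qle_refl].
    by case: qt => [_ [_ [_ [_ [_ [_ [H|H]]]]]]] //; case: (H n).
  - exists mid; rewrite Et.
    by split; [exact: quasi_partition_mid | exact: kNl_infinite | exact: qle_ww_mid].
have [qw Hinfw Htw] := overlay_back HZ qt (W1_quasi_partition Hu) qs Hinf Hts
  Hv (W1_quasi_partition Hv) Huv.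
by apply; left; split=> //; split; [exact: qle_trans Hwwt Htw | have [n [_ Hn]] := Hinfw 0; exists n].
Qed.

Lemma Zrel_rcons (Wi Wj : QP -> Prop) t d u e f g : Zrel Wi Wj t d u e ->
  (exists2 k, k < size d & f = nth 0 d k /\ g = nth 0 e k) \/
    (f \notin d /\ g \notin e) ->
  (qp1 t f -> qp1 u g) -> (qp2 t f -> qp1 u g \/ qp2 u g) ->
  Zrel Wi Wj t (rcons d f) u (rcons e g).
Proof.
move=> [Ht [Hu [Hs [Hb [c1 c2]]]]] Hfg h1 h2.
have Hp := (map_bij_same_eq_pattern Hs).1 Hb.
have Hs' : size (rcons d f) = size (rcons e g) by rewrite !size_rcons Hs.
do 3 split=> //.
split; first by apply/(map_bij_same_eq_pattern Hs'); exact: same_eq_pattern_rcons.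
split.
- exact: (@forall_nth_rcons (fun a b => qp1 t a -> qp1 u b)).
- exact: (@forall_nth_rcons (fun a b => qp2 t a -> qp1 u b \/ qp2 u b)).
Qed.

Lemma Zrel_extend_left (Wi Wj : QP -> Prop) t d u e f :
  Zrel Wi Wj t d u e -> infinite (qp1 u) ->
  exists g, Zrel Wi Wj t (rcons d f) u (rcons e g).
Proof.
move=> HZ Hinf; have [_ [_ [Hs [_ [c1 c2]]]]] := HZ.
case: (boolP (f \in d)) => hf.
- have [k [hk ->]] := mem_nth_index hf; exists (nth 0 e k).
  by apply: Zrel_rcons => //; [left; exists k | exact: c1 | exact: c2].
- have [g [Hg hg]] := infinite_fresh e Hinf; exists g.
  by apply: Zrel_rcons => //; [right | left].
Qed.

Lemma Zrel_extend_right (Wi Wj : QP -> Prop) t d u e g :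
  Zrel Wi Wj t d u e -> quasi_partition t ->
  exists f, Zrel Wi Wj t (rcons d f) u (rcons e g).
Proof.
move=> HZ [_ [t13 [t23 [_ [_ [Hinf _]]]]]]; have [_ [_ [Hs [_ [c1 c2]]]]] := HZ.
case: (boolP (g \in e)) => hg.
- have [k [hk ->]] := mem_nth_index hg; exists (nth 0 d k); rewrite -Hs in hk.
  by apply: Zrel_rcons => //; [left; exists k | exact: c1 | exact: c2].
- have [f [Hf hf]] := infinite_fresh d Hinf; exists f.
  by apply: Zrel_rcons => //; [right | move=> H; case: (t13 f) | move=> H; case: (t23 f)].
Qed.

Lemma asim_dir_Zrel (Wi Wj : QP -> Prop) bi bj :
  (forall s, Wi s -> quasi_partition s) -> (forall s, Wj s -> quasi_partition s) ->
  (forall t d u e v, Zrel Wi Wj t d u e -> Wj v -> qle u v ->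
     exists w, Wi w /\ qle t w /\ Zrel Wi Wj w d v e /\ Zrel Wj Wi v e w d) ->
  @asim_dir PQ arPQ (mkM Wi bi) (mkM Wj bj) (Zrel Wi Wj) (Zrel Wj Wi).
Proof.
move=> qi qj back.
split; first by move=> t d u e [? [? [? _]]].
split.
  move=> t d u e [_ [_ [_ [_ [c1 c2]]]]] P js Hjs Hall [a [Ha HP]].
  case: js Hjs Hall Ha => [|j [|]] //= _; rewrite andbT => hj [Ha].
  exists (nth 0 e j); split=> //.
  by case: P HP; rewrite -Ha; [case=> H; [left; exact: c1 | exact: c2] | exact: c1].
split; first exact: back.
split=> t d u e x HZ; have [Ht [Hu _]] := HZ.
- by have [_ [_ [_ [_ [Hinf _]]]]] := qj _ Hu; exact: Zrel_extend_left.
- exact: Zrel_extend_right (qi _ Ht).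
Qed.

Theorem lemma5p2 : is_CD_asimulation Z12 Z21.
Proof.
split.
- exact: asim_dir_Zrel W1_quasi_partition W2_quasi_partition W1_back.
- exact: asim_dir_Zrel W2_quasi_partition W1_quasi_partition W2_back.
Qed.
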